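(* There exist a finite candidate set $C$, a tie-breaking order $>$ on $C$, a preference profile $V$, and for each GS-manipulator $i$ at $V$ under 4-Approval a minimal GS-manipulation $m_i$ of $i$, such that the GS-game in which each GS-manipulator $i$ has action set $A_i=\{v_i,m_i\}$ has no Nash equilibrium in pure strategies.
   Context: Each voter $i$ has a strict linear order $v_i$ over $C$; $\mathrm{top}_k(v)$ is the set of the $k$ highest-ranked candidates of $v$. $k$-Approval: each candidate gets one point from each voter ranking her among his top $k$; the highest score wins, ties broken in favour of the candidate highest in the fixed strict linear order $>$. Write $\mathcal{R}$ for the rule and $(V_{-i},v_i')$ for $V$ with $v_i$ replaced by $v_i'$. A GS-manipulation of voter $i$ at $V$ is a vote $v_i'$ such that $i$ strictly prefers $\mathcal{R}(V_{-i},v_i')$ to $\mathcal{R}(V)$ and for every vote $v_i''$ either $\mathcal{R}(V_{-i},v_i'')=\mathcal{R}(V_{-i},v_i')$ or $i$ strictly prefers $\mathcal{R}(V_{-i},v_i')$ to $\mathcal{R}(V_{-i},v_i'')$; it is in favour of $x=\mathcal{R}(V_{-i},v_i')$; $i$ is a GS-manipulator if he has one. GS-game for $V$: players are all GS-manipulators at $V$; player $i$'s action set contains $v_i$ and some of his GS-manipulations; non-players vote sincerely; players compare action profiles via their preferences over the resulting winners. Pure Nash equilibrium: no player can obtain a strictly preferred winner by switching to another action of his own action set. Let $w=\mathcal{R}(V)$. A GS-manipulation $v_i'$ in favour of $x$ is of Type 1 if $w,x\notin\mathrm{top}_k(v_i)$ and of Type 2 if $w,x\in\mathrm{top}_k(v_i)$.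 A Type 1 GS-manipulation in favour of $x$ is minimal if $\mathrm{top}_k(v_i')$ is obtained from $\mathrm{top}_k(v_i)$ by removing the $k$-th ranked candidate of $v_i$ and adding $x$. A Type 2 GS-manipulation $v_i'$ is minimal if $\ell=|\mathrm{top}_k(v_i)\setminus\mathrm{top}_k(v_i')|$ is the smallest possible among GS-manipulations of $i$ and $\mathrm{top}_k(v_i')\setminus\mathrm{top}_k(v_i)$ consists of the $\ell$ candidates ranked highest by $v_i$ among those outside $\mathrm{top}_k(v_i)$. *)

From mathcomp Require Import all_boot.
Set Implicit Arguments. Unset Strict Implicit. Unset Printing Implicit Defensive.

Section Voting.
Variable C : finType.

(* A strict linear order over C is represented as the sequence of all
   candidates from highest-ranked to lowest-ranked. *)
Definition linorder (v : seq C) : Prop := perm_eq v (enum C).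

Definition prefers (v : seq C) (x y : C) : bool := index x v < index y v.

Definition topk (k : nat) (v : seq C) : {set C} := [set x | index x v < k].

Variable n : nat.
Definition profile := 'I_n -> seq C.

Definition upd (V : profile) (i : 'I_n) (v : seq C) : profile :=
  fun j => if j == i then v else V j.

Variables (k : nat) (tb : seq C) (x0 : C).
(* tb : the tie-breaking order >, listed from highest to lowest;
   x0 : an arbitrary default element (irrelevant when tb is a linear order). *)

Definition score (V : profile) (x : C) : nat := #|[set i | x \in topk k (V i)]|.

Definition winner (V : profile) : C :=
  odflt x0 [pick x | [forall y, (score V y < score V x) ||
                        ((score V y == score V x) && (index x tb <= index y tb))]].

Definition is_GSmanip (V : profile) (i : 'I_n) (v' : seq C) : Prop :=
  linorder v' /\
  prefers (V i) (winner (upd V i v')) (winner V) /\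
  forall v'', linorder v'' ->
    winner (upd V i v'') = winner (upd V i v') \/
    prefers (V i) (winner (upd V i v')) (winner (upd V i v'')).

Definition is_GSmanipulator (V : profile) (i : 'I_n) : Prop :=
  exists v', is_GSmanip V i v'.

Definition type1 (V : profile) (i : 'I_n) (v' : seq C) : Prop :=
  winner V \notin topk k (V i) /\ winner (upd V i v') \notin topk k (V i).

Definition type2 (V : profile) (i : 'I_n) (v' : seq C) : Prop :=
  winner V \in topk k (V i) /\ winner (upd V i v') \in topk k (V i).

Definition minimal_type1 (V : profile) (i : 'I_n) (v' : seq C) : Prop :=
  type1 V i v' /\
  topk k v' = winner (upd V i v') |: (topk k (V i) :\ nth x0 (V i) k.-1).

Definition minimal_type2 (V : profile) (i : 'I_n) (v' : seq C) : Prop :=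
  type2 V i v' /\
  let ell := #|topk k (V i) :\: topk k v'| in
  (forall v'', is_GSmanip V i v'' -> ell <= #|topk k (V i) :\: topk k v''|) /\
  topk k v' :\: topk k (V i) = [set y | (y \notin topk k (V i)) && (index y (V i) < k + ell)].

Definition minimal_GSmanip (V : profile) (i : 'I_n) (v' : seq C) : Prop :=
  is_GSmanip V i v' /\ (minimal_type1 V i v' \/ minimal_type2 V i v').

End Voting.

From mathcomp Require Import all_boot.
Set Implicit Arguments. Unset Strict Implicit. Unset Printing Implicit Defensive.

(* Take candidates 0, ..., 6 with tie-breaking 0 > 1 > ... > 6 and three voters whose
   top-4 sets are {3,4,5,6}, {0,2,5,6} and {2,3,5,6}, so that 5 wins sincerely.  Each voter
   has a Type-2 minimal GS-manipulation m_i: voter 0 trades 5 for 0, voter 1 trades 5, 6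
   for 4, 1 and voter 2 trades 6, 5 for 4, 1.  In the GS-game the profiles (m0,v1,v2),
   (m0,m1,v2), (m0,m1,m2), (m0,v1,m2) elect 6, 0, 4, 0 and form a cycle of profitable
   switches by voters 1, 2, 1, 2, and every other profile has a profitable switch leading
   into it, so there is no pure equilibrium.

   All of this is decided by evaluation: the winner depends only on the list of ballots,
   quantifiers over votes range over the 5040 permutations of the candidates, and all
   GS-manipulations of a voter elect the same winner, so minimality only has to be checked
   against the votes electing it. *)

Fixpoint choices (T : Type) (ss : seq (seq T)) : seq (seq T) :=
  if ss is s :: ss' then [seq x :: t | x <- s, t <- choices ss'] else [:: [::]].

Lemma mem_choices (T : eqType) (ss : seq (seq T)) (t : seq T) :
  (t \in choices ss) = all2 (fun x s => x \in s) t ss.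
Proof.
elim: ss t => [|s ss IH] [|x t] //=; first by apply/allpairsP => -[[y u] []].
apply/allpairsP/andP => [[[y u] /= [y_s u_ss [-> ->]]] | [x_s t_ss]].
  by split=> //; rewrite -IH.
by exists (x, t); split=> //; rewrite IH.
Qed.

Section Ballots.
Variables (C : finType) (n : nat).

Definition ballots (V : profile C n) : seq (seq C) := [seq V j | j <- enum 'I_n].

Lemma size_ballots (V : profile C n) : size (ballots V) = n.
Proof. by rewrite size_map size_enum_ord. Qed.

Lemma nth_ballots (V : profile C n) (i : 'I_n) : nth [::] (ballots V) i = V i.
Proof. by rewrite (nth_map i) ?size_enum_ord // nth_ord_enum. Qed.

Lemma ballots_upd (V : profile C n) (i : 'I_n) (v : seq C) :
  ballots (upd V i v) = set_nth [::] (ballots V) i v.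
Proof.
have size_upd : size (set_nth [::] (ballots V) i v) = n.
  by rewrite size_set_nth size_ballots (maxn_idPr (ltn_ord i)).
apply: (@eq_from_nth _ [::]) => [|j]; rewrite size_ballots ?size_upd // => lt_j_n.
pose jo := Ordinal lt_j_n; rewrite nth_set_nth /= -[j]/(val jo) !nth_ballots.
by rewrite /upd val_eqE.
Qed.

End Ballots.

Lemma ballots_nth (C : finType) (s : seq (seq C)) :
  ballots (fun i : 'I_(size s) => nth [::] s i) = s.
Proof.
by rewrite /ballots (map_comp (nth [::] s) val) val_enum_ord -/(mkseq _ _) mkseq_nth.
Qed.

Section KApproval.
Variables (C : finType) (k : nat) (tb : seq C) (x0 : C).
Hypothesis tb_linorder : linorder tb.

Definition approval_score (bs : seq (seq C)) (x : C) : nat :=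
  count (fun v => index x v < k) bs.

(* Unlike [winner], this evaluates under [vm_compute]: finite sets, big operators and the
   enumeration of a finType are locked. *)
Definition approval_winner (bs : seq (seq C)) : C :=
  let top := foldr maxn 0 (map (approval_score bs) tb) in
  nth x0 tb (find (fun x => approval_score bs x == top) tb).

Lemma score_ballots n (V : profile C n) x :
  score k V x = approval_score (ballots V) x.
Proof.
rewrite /score /approval_score count_map enumT cardE /enum_mem size_filter.
by apply: eq_count => j; rewrite /= !inE.
Qed.

Lemma winner_ballots n (V : profile C n) :
  winner k tb x0 V = approval_winner (ballots V).
Proof.
set bs := ballots V; rewrite /winner /approval_winner.
set sc := approval_score bs; set top := foldr _ _ _.
have tb_uniq : uniq tb by rewrite (perm_uniq tb_linorder) enum_uniq.
have in_tb x : x \in tb by rewrite (perm_mem tb_linorder) mem_enum.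
have topE : top = \max_(y <- tb) sc y by rewrite /top foldrE big_map.
have le_top y : sc y <= top by rewrite topE leq_bigmax_seq.
have has_top : has (fun x => sc x == top) tb.
  apply/hasP; exists [arg max_(y > x0) sc y]; first exact: in_tb.
  by rewrite topE (perm_big _ tb_linorder) big_enum (bigmax_eq_arg x0).
set w := nth x0 tb _.
have w_top : sc w == top := nth_find x0 has_top.
have index_w : index w tb = find (fun x => sc x == top) tb.
  by rewrite index_uniq // -has_find.
have outranks_w y : (score k V y < score k V w) ||
    ((score k V y == score k V w) && (index w tb <= index y tb)).
  rewrite !score_ballots -/bs -/sc (eqP w_top) ltn_neqAle le_top andbT.
  case: eqP => //= sc_y; rewrite index_w leqNgt; apply/negP => lt_y.
  by move: (before_find x0 lt_y); rewrite nth_index // sc_y eqxx.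
case: pickP => [z /forallP/(_ w) w_z | /(_ w) /=]; last first.
  by move/forallP: outranks_w => ->.
have index_z : index z tb = index w tb.
  by move: w_z (outranks_w z); case: ltngtP => //= _; case: ltngtP.
by rewrite -(nth_index x0 (in_tb z)) index_z nth_index.
Qed.

Lemma mem_permutations_linorder v : (v \in permutations tb) = perm_eq v (enum C).
Proof. by rewrite mem_permutations (permPr tb_linorder). Qed.

Lemma card_topk_setD v w :
  #|topk k v :\: topk k w| = count (fun y => ~~ (index y w < k) && (index y v < k)) tb.
Proof.
rewrite cardE /enum_mem size_filter -enumT -(permP tb_linorder).
by apply: eq_count => y /=; rewrite !inE.
Qed.

Lemma GSmanip_winner_unique n (V : profile C n) i v w :
  is_GSmanip k tb x0 V i v -> is_GSmanip k tb x0 V i w ->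
  winner k tb x0 (upd V i v) = winner k tb x0 (upd V i w).
Proof.
move=> [v_lin [_ v_best]] [w_lin [_ w_best]].
case: (v_best w w_lin) => [-> // | v_w]; case: (w_best v v_lin) => [-> // | w_v].
by move: (ltn_trans v_w w_v); rewrite ltnn.
Qed.

Definition is_GSmanipb (bs : seq (seq C)) (i : nat) (v : seq C) : bool :=
  let vi := nth [::] bs i in
  let x := approval_winner (set_nth [::] bs i v) in
  [&& v \in permutations tb, prefers vi x (approval_winner bs)
    & all (fun w => let y := approval_winner (set_nth [::] bs i w) in
                    (y == x) || prefers vi x y) (permutations tb)].

Lemma is_GSmanipP n (V : profile C n) (i : 'I_n) v :
  reflect (is_GSmanip k tb x0 V i v) (is_GSmanipb (ballots V) i v).
Proof.
rewrite /is_GSmanipb nth_ballots -ballots_upd -!winner_ballots.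
apply: (iffP and3P) => [[v_lin x_pref /allP best] | [v_lin [x_pref best]]].
  split; first by rewrite /linorder -mem_permutations_linorder.
  split=> // w w_lin; move: (best w); rewrite mem_permutations_linorder => /(_ w_lin).
  by rewrite -ballots_upd -winner_ballots => /orP[/eqP|]; [left | right].
split=> //; first by rewrite mem_permutations_linorder.
apply/allP => w; rewrite mem_permutations_linorder -ballots_upd -winner_ballots.
by move=> /best [->|]; rewrite ?eqxx // orbC => ->.
Qed.

Definition is_minimal_type2b (bs : seq (seq C)) (i : nat) (v : seq C) : bool :=
  let vi := nth [::] bs i in
  let x := approval_winner (set_nth [::] bs i v) in
  let loss w := count (fun y => ~~ (index y w < k) && (index y vi < k)) tb in
  [&& index (approval_winner bs) vi < k, index x vi < k,
      all (fun w => (approval_winner (set_nth [::] bs i w) == x) ==> (loss v <= loss w))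
        (permutations tb)
    & all (fun y => (~~ (index y vi < k) && (index y v < k)) ==
                    (~~ (index y vi < k) && (index y vi < k + loss v))) tb].

Lemma minimal_type2P n (V : profile C n) (i : 'I_n) v :
  is_GSmanip k tb x0 V i v -> is_minimal_type2b (ballots V) i v ->
  minimal_type2 k tb x0 V i v.
Proof.
have in_tb y : y \in tb by rewrite (perm_mem tb_linorder) mem_enum.
rewrite /is_minimal_type2b nth_ballots -ballots_upd -!winner_ballots.
move=> v_GS /and4P[w_top x_top /allP loss_min /allP new_tops].
split; first by rewrite /type2 /topk !inE.
rewrite card_topk_setD; split.
  move=> w w_GS; rewrite card_topk_setD.
  have := loss_min w; rewrite mem_permutations_linorder -ballots_upd -winner_ballots.
  by move=> /(_ w_GS.1)/implyP; apply; rewrite (GSmanip_winner_unique w_GS v_GS).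
by apply/setP => y; rewrite !inE; apply/eqP/new_tops.
Qed.

Definition GSgame_equilibrium n (V m sigma : profile C n) : Prop :=
  (forall i, sigma i = V i \/ (is_GSmanipulator k tb x0 V i /\ sigma i = m i)) /\
  (forall i, is_GSmanipulator k tb x0 V i ->
     forall a, a = V i \/ a = m i ->
       ~ prefers (V i) (winner k tb x0 (upd sigma i a)) (winner k tb x0 sigma)).

Definition has_profitable_deviation (vs ms bs : seq (seq C)) : bool :=
  has (fun i => has (fun a => prefers (nth [::] vs i)
                                (approval_winner (set_nth [::] bs i a)) (approval_winner bs))
                    [:: nth [::] vs i; nth [::] ms i])
      (iota 0 (size bs)).

Lemma GSgame_no_equilibrium n (V m : profile C n) :
  (forall i, is_GSmanipulator k tb x0 V i) ->
  all (has_profitable_deviation (ballots V) (ballots m))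
      (choices [seq [:: p.1; p.2] | p <- zip (ballots V) (ballots m)]) ->
  ~ exists sigma, GSgame_equilibrium V m sigma.
Proof.
move=> manipulators /allP deviation [sigma [sigma_actions stable]].
have sigma_choice : ballots sigma \in
    choices [seq [:: p.1; p.2] | p <- zip (ballots V) (ballots m)].
  rewrite mem_choices zip_map -map_comp all2E !size_map eqxx zip_map all_map.
  apply/allP => j _ /=.
  by case: (sigma_actions j) => [|[_]] ->; rewrite !inE eqxx ?orbT.
have /hasP[i] := deviation _ sigma_choice.
rewrite mem_iota add0n size_ballots => /andP[_ i_lt].
pose io := Ordinal i_lt; rewrite -[i]/(io : nat) !nth_ballots => /hasP[a a_act].
rewrite -ballots_upd -!winner_ballots; apply: (stable io (manipulators io)).
by move: a_act; rewrite !inE => /orP[] /eqP; [left | right].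
Qed.

End KApproval.

(* [inord] would not do: it goes through the opaque [idP] and does not evaluate. *)
Definition cand (j : nat) : 'I_7 := Ordinal (ltn_pmod j (isT : 0 < 7)).

Definition ballot (s : seq nat) : seq 'I_7 := map cand s.

Definition tiebreak : seq 'I_7 := ballot (iota 0 7).

Definition sincere_ballots : seq (seq 'I_7) :=
  [:: ballot [:: 4; 3; 6; 5; 0; 1; 2];
      ballot [:: 2; 5; 0; 6; 4; 1; 3];
      ballot [:: 2; 3; 6; 5; 4; 1; 0]].

Definition manip_ballots : seq (seq 'I_7) :=
  [:: ballot [:: 4; 3; 6; 0; 5; 1; 2];
      ballot [:: 2; 0; 4; 1; 5; 6; 3];
      ballot [:: 2; 3; 4; 1; 6; 5; 0]].

Definition sincere : profile 'I_7 3 := fun i => nth [::] sincere_ballots i.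
Definition manip : profile 'I_7 3 := fun i => nth [::] manip_ballots i.

Lemma tiebreak_linorder : linorder tiebreak.
Proof.
have -> : tiebreak = enum 'I_7 by apply: (inj_map val_inj); rewrite val_enum_ord.
exact: perm_refl.
Qed.

Lemma ballots_sincere : ballots sincere = sincere_ballots.
Proof. exact: (ballots_nth sincere_ballots). Qed.

Lemma ballots_manip : ballots manip = manip_ballots.
Proof. exact: (ballots_nth manip_ballots). Qed.

Lemma sincere_linorder i : linorder (sincere i).
Proof.
rewrite /linorder -(mem_permutations_linorder tiebreak_linorder).
rewrite -(nth_ballots sincere) ballots_sincere.
have /allP/(_ (sincere i)) : all (mem (permutations tiebreak)) sincere_ballots.
  by vm_compute.
by apply; rewrite mem_nth.
Qed.

Lemma manip_GSmanip i : is_GSmanip 4 tiebreak ord0 sincere i (manip i).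
Proof.
apply/is_GSmanipP; first exact: tiebreak_linorder.
rewrite -(nth_ballots manip) ballots_sincere ballots_manip.
have /allP/(_ i) : all (fun i => is_GSmanipb 4 tiebreak ord0 sincere_ballots i
                                   (nth [::] manip_ballots i)) (iota 0 3).
  by vm_compute.
by apply; rewrite mem_iota ltn_ord.
Qed.

Lemma manip_minimal i : minimal_GSmanip 4 tiebreak ord0 sincere i (manip i).
Proof.
split; first exact: manip_GSmanip.
right; apply: minimal_type2P; [exact: tiebreak_linorder | exact: manip_GSmanip |].
rewrite -(nth_ballots manip) ballots_sincere ballots_manip.
have /allP/(_ i) : all (fun i => is_minimal_type2b 4 tiebreak ord0 sincere_ballots i
                                   (nth [::] manip_ballots i)) (iota 0 3).
  by vm_compute.
by apply; rewrite mem_iota ltn_ord.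
Qed.

Theorem mainTheorem4 :
  exists (C : finType) (x0 : C) (tb : seq C) (n : nat) (V : 'I_n -> seq C)
         (m : 'I_n -> seq C),
    linorder tb /\
    (forall i, linorder (V i)) /\
    (forall i, is_GSmanipulator 4 tb x0 V i -> minimal_GSmanip 4 tb x0 V i (m i)) /\
    ~ (exists sigma : 'I_n -> seq C,
          (forall i, sigma i = V i \/ (is_GSmanipulator 4 tb x0 V i /\ sigma i = m i)) /\
          (forall i, is_GSmanipulator 4 tb x0 V i ->
             forall a, a = V i \/ a = m i ->
               ~ prefers (V i) (winner 4 tb x0 (upd sigma i a)) (winner 4 tb x0 sigma))).
Proof.
exists 'I_7, ord0, tiebreak, 3, sincere, manip.
have manipulators i : is_GSmanipulator 4 tiebreak ord0 sincere i.
  by exists (manip i); exact: manip_GSmanip.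
split; first exact: tiebreak_linorder.
split; first exact: sincere_linorder.
split; first by move=> i _; exact: manip_minimal.
apply: (GSgame_no_equilibrium tiebreak_linorder manipulators).
by rewrite ballots_sincere ballots_manip; vm_compute.
Qed.
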